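(* For $A\in\mathrm{SL}(2,\mathbb R)$ the following are equivalent: (1) $A\Lambda_q$ contains a vertical vector (a nonzero vector of the form $(0,y)^T$); (2) there exists $s_0>0$ with $h_{s_0}A\Lambda_q=A\Lambda_q$; (3) there exists $\tau_0>0$ with $A\Lambda_q\cap S_{\tau_0}=\emptyset$. Moreover, if $A\Lambda_q$ contains a vertical vector of length $a>0$, then the smallest $s_0>0$ with $h_{s_0}A\Lambda_q=A\Lambda_q$ is $\lambda_qa^2$.
   Context: Fix an integer $q\ge3$, let $\lambda_q=2\cos(\pi/q)$, and let $G_q\subset \mathrm{SL}(2,\mathbb R)$ be the Hecke triangle group generated by $S=\begin{pmatrix}0&-1\\1&0\end{pmatrix}$ and $T_q=\begin{pmatrix}1&\lambda_q\\0&1\end{pmatrix}$, acting linearly on $\mathbb R^2$. Set $\Lambda_q=G_q(1,0)^T$ and $A\Lambda_q=\{A\mathbf v:\mathbf v\in\Lambda_q\}$. $h_s=\begin{pmatrix}1&0\\-s&1\end{pmatrix}$ for $s\in\mathbb R$; for $\tau>0$, $S_\tau=\{(x,y)^T:0<x\le\tau\}$. *)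

From Stdlib Require Import Reals.
Open Scope R_scope.

Record mat2 := Mat2 { m11 : R; m12 : R; m21 : R; m22 : R }.
Definition vec2 := (R * R)%type.

Definition mmul (A B : mat2) : mat2 :=
  Mat2 (m11 A * m11 B + m12 A * m21 B) (m11 A * m12 B + m12 A * m22 B)
       (m21 A * m11 B + m22 A * m21 B) (m21 A * m12 B + m22 A * m22 B).

Definition mapp (A : mat2) (v : vec2) : vec2 :=
  (m11 A * fst v + m12 A * snd v, m21 A * fst v + m22 A * snd v).

Definition det2 (A : mat2) : R := m11 A * m22 A - m12 A * m21 A.

Definition inSL2 (A : mat2) : Prop := det2 A = 1.

Definition lambda_q (q : nat) : R := 2 * cos (PI / INR q).

Definition Id2 : mat2 := Mat2 1 0 0 1.
Definition Smat : mat2 := Mat2 0 (-1) 1 0.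
Definition Sinv : mat2 := Mat2 0 1 (-1) 0.
Definition Tmat (q : nat) : mat2 := Mat2 1 (lambda_q q) 0 1.
Definition Tinv (q : nat) : mat2 := Mat2 1 (- lambda_q q) 0 1.

Inductive inGq (q : nat) : mat2 -> Prop :=
| Gq_id : inGq q Id2
| Gq_S : forall g, inGq q g -> inGq q (mmul Smat g)
| Gq_Sinv : forall g, inGq q g -> inGq q (mmul Sinv g)
| Gq_T : forall g, inGq q g -> inGq q (mmul (Tmat q) g)
| Gq_Tinv : forall g, inGq q g -> inGq q (mmul (Tinv q) g).

Definition Lambda_q (q : nat) (v : vec2) : Prop :=
  exists g, inGq q g /\ v = mapp g (1, 0).

Definition ALambda (q : nat) (A : mat2) (v : vec2) : Prop :=
  exists w, Lambda_q q w /\ v = mapp A w.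

Definition hmat (s : R) : mat2 := Mat2 1 0 (- s) 1.

Definition set_invariant (B : mat2) (P : vec2 -> Prop) : Prop :=
  forall v, (exists w, P w /\ v = mapp B w) <-> P v.

Definition in_strip (tau : R) (v : vec2) : Prop := 0 < fst v <= tau.

From Stdlib Require Import Reals Lra Lia ZArith Classical.
Open Scope R_scope.

(* Up to sign, every point of Lambda_q is e1 moved by a reduced word alternating S^-1 with
   powers U^k (1 <= k <= q-1) of U = T_q S; a ping-pong argument puts these vectors in the
   first or fourth quadrant with entries 0 or of size >= 1.  Transported by G_q, this makes
   det(w, v) for w, v in Lambda_q either 0 (and then v = +-w) or of size >= 1, and the
   conjugates of T_q give the shears v -> v +- lambda_q det(w, v) w of Lambda_q.
   If A w0 = (0, y), then h_s acts on A Lambda_q as the shear along w0 with parameter s / y^2,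
   which yields invariance for s = lambda_q y^2, its minimality, and an empty strip.
   Conversely, h_s-invariance lets one shear a strip point into a box too small to contain
   A-images of Lambda_q, and without vertical vectors a Euclidean algorithm on first
   coordinates of A-images produces strip points with arbitrarily small first coordinate. *)

Definition hecke_angle (q : nat) : R := PI / INR q.

Definition sin_ratio (q j : nat) : R := sin (INR j * hecke_angle q) / sin (hecke_angle q).

Section HeckeTrig.
Variable q : nat.
Hypothesis hq : (3 <= q)%nat.

Lemma hecke_angle_bounds : 0 < hecke_angle q <= PI / 3.
Proof.
  assert (hq3 : 3 <= INR q) by (replace 3 with (INR 3) by (simpl; ring); apply le_INR; exact hq).
  pose proof PI_RGT_0; unfold hecke_angle; split.
  - apply Rdiv_lt_0_compat; lra.
  - apply Rmult_le_compat_l; [lra|]. apply Rinv_le_contravar; lra.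
Qed.

Lemma hecke_angle_mul : INR q * hecke_angle q = PI.
Proof.
  assert (hq0 : INR q <> 0) by (apply not_0_INR; lia).
  unfold hecke_angle; field; exact hq0.
Qed.

Lemma sin_hecke_angle_pos : 0 < sin (hecke_angle q).
Proof. pose proof hecke_angle_bounds; pose proof PI_RGT_0; apply sin_gt_0; lra. Qed.

Lemma lambda_q_bounds : 0 < lambda_q q < 2.
Proof.
  pose proof hecke_angle_bounds as [h0 h3]; pose proof PI_RGT_0.
  assert (hcos : 0 < cos (hecke_angle q) < cos 0).
  { split; [apply cos_gt_0 | apply cos_decreasing_1]; lra. }
  rewrite cos_0 in hcos; unfold lambda_q; fold (hecke_angle q); lra.
Qed.

Lemma sin_ratio_0 : sin_ratio q 0 = 0.
Proof. unfold sin_ratio; rewrite Rmult_0_l, sin_0; unfold Rdiv; ring. Qed.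

Lemma sin_ratio_1 : sin_ratio q 1 = 1.
Proof.
  pose proof sin_hecke_angle_pos; unfold sin_ratio; rewrite Rmult_1_l; field; lra.
Qed.

(* sin((j+1)t) + sin((j-1)t) = 2 cos t sin(jt). *)
Lemma sin_ratio_rec j :
  sin_ratio q (S (S j)) = lambda_q q * sin_ratio q (S j) - sin_ratio q j.
Proof.
  pose proof sin_hecke_angle_pos as hs; unfold sin_ratio, lambda_q; fold (hecke_angle q).
  revert hs; generalize (hecke_angle q); intros t hs; rewrite !S_INR.
  replace ((INR j + 1 + 1) * t) with ((INR j + 1) * t + t) by ring.
  replace (INR j * t) with ((INR j + 1) * t - t) by ring.
  rewrite sin_plus, sin_minus; field; lra.
Qed.

Lemma sin_ratio_2 : sin_ratio q 2 = lambda_q q.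
Proof. rewrite (sin_ratio_rec 0), sin_ratio_0, sin_ratio_1; ring. Qed.

Lemma sin_ratio_q : sin_ratio q q = 0.
Proof. unfold sin_ratio; rewrite hecke_angle_mul, sin_PI; unfold Rdiv; ring. Qed.

Lemma sin_ratio_pred_q : sin_ratio q (q - 1) = 1.
Proof.
  pose proof sin_hecke_angle_pos; unfold sin_ratio; rewrite minus_INR by lia.
  replace ((INR q - INR 1) * hecke_angle q) with (PI - hecke_angle q)
    by (rewrite <- hecke_angle_mul; simpl; ring).
  rewrite sin_PI_x; field; lra.
Qed.

Lemma sin_ratio_q_minus_2 : sin_ratio q (q - 2) = lambda_q q.
Proof.
  pose proof (sin_ratio_rec (q - 2)) as e.
  replace (S (S (q - 2))) with q in e by lia; replace (S (q - 2)) with (q - 1)%nat in e by lia.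
  rewrite sin_ratio_q, sin_ratio_pred_q in e; lra.
Qed.

Lemma sin_ratio_nonneg j : (j <= q)%nat -> 0 <= sin_ratio q j.
Proof.
  intro hj; pose proof sin_hecke_angle_pos; pose proof hecke_angle_bounds.
  assert (hjq : INR j <= INR q) by (apply le_INR; exact hj).
  pose proof (pos_INR j); pose proof hecke_angle_mul.
  unfold sin_ratio, Rdiv; apply Rmult_le_pos; [apply sin_ge_0; nra |].
  left; apply Rinv_0_lt_compat; lra.
Qed.

(* sin(j t) >= sin t for t <= j t <= pi - t, by monotonicity of sin on either side of pi/2. *)
Lemma sin_ratio_ge_1 j : (1 <= j <= q - 1)%nat -> 1 <= sin_ratio q j.
Proof.
  intro hj; pose proof sin_hecke_angle_pos; pose proof hecke_angle_bounds; pose proof PI_RGT_0.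
  assert (hj1 : 1 <= INR j) by (replace 1 with (INR 1) by reflexivity; apply le_INR; lia).
  assert (hjq : INR j <= INR q - 1)
    by (replace (INR q - 1) with (INR (q - 1)) by (rewrite minus_INR by lia; simpl; ring);
        apply le_INR; lia).
  pose proof hecke_angle_mul.
  assert (hsin : sin (hecke_angle q) <= sin (INR j * hecke_angle q)).
  { destruct (Rle_dec (INR j * hecke_angle q) (PI / 2)).
    - apply sin_incr_1; nra.
    - rewrite <- (sin_PI_x (INR j * hecke_angle q)); apply sin_incr_1; nra. }
  unfold sin_ratio; apply (Rmult_le_reg_r (sin (hecke_angle q))); [lra|].
  unfold Rdiv; rewrite Rmult_assoc, Rinv_l; lra.
Qed.

End HeckeTrig.

Definition vopp (v : vec2) : vec2 := (- fst v, - snd v).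
Definition vdet (w v : vec2) : R := fst w * snd v - snd w * fst v.
Definition vshift (v : vec2) (t : R) (w : vec2) : vec2 :=
  (fst v + t * fst w, snd v + t * snd w).

Lemma vopp_involutive v : vopp (vopp v) = v.
Proof. destruct v; unfold vopp; simpl; f_equal; ring. Qed.

Lemma mapp_mmul X Y v : mapp (mmul X Y) v = mapp X (mapp Y v).
Proof. destruct v; unfold mapp, mmul; simpl; f_equal; ring. Qed.

Lemma mapp_Id2 v : mapp Id2 v = v.
Proof. destruct v; unfold mapp, Id2; simpl; f_equal; ring. Qed.

Lemma mapp_vopp X v : mapp X (vopp v) = vopp (mapp X v).
Proof. destruct v; unfold mapp, vopp; simpl; f_equal; ring. Qed.

Lemma mapp_vshift X v t w : mapp X (vshift v t w) = vshift (mapp X v) t (mapp X w).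
Proof. destruct v, w; unfold vshift, mapp; simpl; f_equal; ring. Qed.

Lemma vdet_mapp X w v : vdet (mapp X w) (mapp X v) = det2 X * vdet w v.
Proof. destruct w, v; unfold vdet, mapp, det2; simpl; ring. Qed.

Lemma vdet_vshift w v t : vdet w (vshift v t w) = vdet w v.
Proof. unfold vdet, vshift; simpl; ring. Qed.

Lemma vdet_vshift_self v t w : vdet v (vshift v t w) = - t * vdet w v.
Proof. unfold vdet, vshift; simpl; ring. Qed.

Lemma vshift_vshift v t x w : vshift (vshift v t w) x w = vshift v (t + x) w.
Proof. unfold vshift; simpl; f_equal; ring. Qed.

Lemma vshift_0 v w : vshift v 0 w = v.
Proof. destruct v; unfold vshift; simpl; f_equal; ring. Qed.

(* U = T_q S has order q in PSL(2,R); its powers have entries given by [sin_ratio]. *)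
Definition Umat (q : nat) : mat2 := Mat2 (lambda_q q) (-1) 1 0.
Definition Uinv (q : nat) : mat2 := Mat2 0 1 (-1) (lambda_q q).

(* Orbit points of e1 under reduced words, alternating S^-1 and U^k (1 <= k <= q-1);
   the flag records whether the last letter is a power of U.  The vector built by
   [reduced_Upow] is U^(j+1) (a, c). *)
Inductive reduced (q : nat) : bool -> vec2 -> Prop :=
| reduced_e1 : reduced q false (1, 0)
| reduced_Sinv a c : reduced q true (a, c) -> reduced q false (c, - a)
| reduced_Upow a c j : reduced q false (a, c) -> (j <= q - 2)%nat ->
    reduced q true (a * sin_ratio q (S (S j)) - c * sin_ratio q (S j),
                    a * sin_ratio q (S j) - c * sin_ratio q j).

Definition signed_reduced (q : nat) (v : vec2) : Prop :=
  exists b, reduced q b v \/ reduced q b (vopp v).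

Definition ping_pong_quadrant (b : bool) (v : vec2) : Prop :=
  if b then (fst v = 0 /\ snd v = 1) \/ (1 <= fst v /\ 1 <= snd v)
  else (fst v = 1 /\ snd v = 0) \/ (1 <= fst v /\ snd v <= -1).

Section ReducedWords.
Variable q : nat.
Hypothesis hq : (3 <= q)%nat.

Lemma reduced_eq b v w : reduced q b v -> v = w -> reduced q b w.
Proof. intros H <-; exact H. Qed.

Lemma reduced_ping_pong b v : reduced q b v -> ping_pong_quadrant b v.
Proof.
  induction 1 as [| a c _ IH | a c j _ IH hj]; simpl in *; [lra | lra |].
  assert (s1 : 1 <= sin_ratio q (S j)) by (apply sin_ratio_ge_1; lia).
  assert (s0 : 0 <= sin_ratio q j) by (apply sin_ratio_nonneg; lia).
  destruct (Nat.eq_dec (S (S j)) q) as [e | e].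
  - assert (e2 : sin_ratio q (S (S j)) = 0) by (rewrite e; apply sin_ratio_q; lia).
    assert (e1 : sin_ratio q (S j) = 1)
      by (replace (S j) with (q - 1)%nat by lia; apply sin_ratio_pred_q; lia).
    rewrite e1, e2; destruct IH as [[-> ->] | [ha hc]]; [left | right]; split; nra.
  - assert (s2 : 1 <= sin_ratio q (S (S j))) by (apply sin_ratio_ge_1; lia).
    right; destruct IH as [[-> ->] | [ha hc]]; split; nra.
Qed.

Lemma signed_reduced_entries a c : signed_reduced q (a, c) ->
  (c = 0 /\ (a = 1 \/ a = -1)) \/ 1 <= Rabs c.
Proof.
  intros [b [H | H]]; apply reduced_ping_pong in H; unfold vopp, ping_pong_quadrant in H;
    destruct b; simpl in H; split_Rabs; lra.
Qed.

Lemma signed_reduced_vopp v : signed_reduced q v -> signed_reduced q (vopp v).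
Proof.
  intros [b H]; exists b; rewrite vopp_involutive; tauto.
Qed.

Lemma signed_reduced_mapp M :
  (forall b v, reduced q b v -> signed_reduced q (mapp M v)) ->
  forall v, signed_reduced q v -> signed_reduced q (mapp M v).
Proof.
  intros HM v [b [H | H]]; [exact (HM b v H) |].
  rewrite <- (vopp_involutive v), mapp_vopp; apply signed_reduced_vopp, (HM b _ H).
Qed.

Lemma reduced_Upow_eq a c j v : reduced q false (a, c) -> (j <= q - 2)%nat ->
  v = (a * sin_ratio q (S (S j)) - c * sin_ratio q (S j),
       a * sin_ratio q (S j) - c * sin_ratio q j) -> reduced q true v.
Proof. intros H hj ->; exact (reduced_Upow q a c j H hj). Qed.

Lemma reduced_Upow_last a c v : reduced q false (a, c) ->
  v = (- c, a - lambda_q q * c) -> reduced q true v.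
Proof.
  intros H ->; apply (reduced_Upow_eq a c (q - 2)); [exact H | lia |].
  replace (S (S (q - 2))) with q by lia; replace (S (q - 2)) with (q - 1)%nat by lia.
  rewrite sin_ratio_q, sin_ratio_pred_q, sin_ratio_q_minus_2 by lia; f_equal; ring.
Qed.

Lemma reduced_Upow_first a c v : reduced q false (a, c) ->
  v = (lambda_q q * a - c, a) -> reduced q true v.
Proof.
  intros H ->; apply (reduced_Upow_eq a c 0); [exact H | lia |].
  rewrite sin_ratio_0, sin_ratio_1, sin_ratio_2 by lia; f_equal; ring.
Qed.

Lemma reduced_e2 : reduced q true (0, 1).
Proof. apply (reduced_Upow_last 1 0); [constructor | f_equal; ring]. Qed.

Lemma reduced_mapp_Sinv b v : reduced q b v -> signed_reduced q (mapp Sinv v).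
Proof.
  intro H; unfold mapp, Sinv; destruct H as [| a c H | a c j H hj]; simpl.
  - exists true; right; eapply reduced_eq; [exact reduced_e2 | unfold vopp; simpl; f_equal; ring].
  - exists true; right; eapply reduced_eq; [exact H | unfold vopp; simpl; f_equal; ring].
  - exists false; left; eapply reduced_eq;
      [exact (reduced_Sinv q _ _ (reduced_Upow q a c j H hj)) | f_equal; ring].
Qed.

Lemma reduced_mapp_Umat b v : reduced q b v -> signed_reduced q (mapp (Umat q) v).
Proof.
  intro H; unfold mapp, Umat; destruct H as [| a c H | a c j H hj]; simpl.
  - exists true; left; apply (reduced_Upow_first 1 0); [constructor | f_equal; ring].
  - exists true; left; apply (reduced_Upow_first c (- a)); [constructor; exact H | f_equal; ring].
  - destruct (Nat.eq_dec j (q - 2)) as [-> | e].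
    + exists false; right; eapply reduced_eq; [exact H |].
      replace (S (S (q - 2))) with q by lia; replace (S (q - 2)) with (q - 1)%nat by lia.
      rewrite sin_ratio_q, sin_ratio_pred_q, sin_ratio_q_minus_2 by lia.
      unfold vopp; simpl; f_equal; ring.
    + exists true; left; apply (reduced_Upow_eq a c (S j)); [exact H | lia |].
      rewrite (sin_ratio_rec q hq (S j)), (sin_ratio_rec q hq j); f_equal; ring.
Qed.

Lemma reduced_mapp_Uinv b v : reduced q b v -> signed_reduced q (mapp (Uinv q) v).
Proof.
  intro H; unfold mapp, Uinv; destruct H as [| a c H | a c j H hj]; simpl.
  - exists true; right; eapply reduced_eq; [exact reduced_e2 | unfold vopp; simpl; f_equal; ring].
  - exists true; right; apply (reduced_Upow_last c (- a)); [constructor; exact H |].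
    unfold vopp; simpl; f_equal; ring.
  - destruct j as [| j].
    + exists false; left; eapply reduced_eq; [exact H |].
      rewrite sin_ratio_0, sin_ratio_1, sin_ratio_2 by lia; f_equal; ring.
    + exists true; left; apply (reduced_Upow_eq a c j); [exact H | lia |].
      rewrite (sin_ratio_rec q hq (S j)), (sin_ratio_rec q hq j); f_equal; ring.
Qed.

Lemma Lambda_q_signed_reduced v : Lambda_q q v -> signed_reduced q v.
Proof.
  intros [g [Hg ->]]; induction Hg as [| g _ IH | g _ IH | g _ IH | g _ IH];
    rewrite ?mapp_Id2, ?mapp_mmul.
  - exists false; left; constructor.
  - replace (mapp Smat (mapp g (1, 0))) with (vopp (mapp Sinv (mapp g (1, 0))))
      by (unfold mapp, vopp; simpl; f_equal; ring).
    apply signed_reduced_vopp, (signed_reduced_mapp _ reduced_mapp_Sinv), IH.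
  - apply (signed_reduced_mapp _ reduced_mapp_Sinv), IH.
  - replace (mapp (Tmat q) (mapp g (1, 0))) with (mapp (Umat q) (mapp Sinv (mapp g (1, 0))))
      by (unfold mapp; simpl; f_equal; ring).
    apply (signed_reduced_mapp _ reduced_mapp_Umat), (signed_reduced_mapp _ reduced_mapp_Sinv), IH.
  - replace (mapp (Tinv q) (mapp g (1, 0)))
      with (vopp (mapp Sinv (mapp (Uinv q) (mapp g (1, 0)))))
      by (unfold mapp, vopp; simpl; f_equal; ring).
    apply signed_reduced_vopp, (signed_reduced_mapp _ reduced_mapp_Sinv),
      (signed_reduced_mapp _ reduced_mapp_Uinv), IH.
Qed.

Lemma Lambda_q_entries a c : Lambda_q q (a, c) ->
  (c = 0 /\ (a = 1 \/ a = -1)) \/ 1 <= Rabs c.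
Proof. intro H; apply signed_reduced_entries, Lambda_q_signed_reduced, H. Qed.

End ReducedWords.

Definition hecke_gen (q : nat) (X : mat2) : Prop :=
  X = Smat \/ X = Sinv \/ X = Tmat q \/ X = Tinv q.

Lemma hecke_gen_inverse q X : hecke_gen q X ->
  det2 X = 1 /\ exists Y, hecke_gen q Y /\ forall v, mapp X (mapp Y v) = v.
Proof.
  unfold hecke_gen; intros [-> | [-> | [-> | ->]]]; (split; [unfold det2; simpl; ring |]).
  - exists Sinv; split; [tauto | intros []; unfold mapp; simpl; f_equal; ring].
  - exists Smat; split; [tauto | intros []; unfold mapp; simpl; f_equal; ring].
  - exists (Tinv q); split; [tauto | intros []; unfold mapp; simpl; f_equal; ring].
  - exists (Tmat q); split; [tauto | intros []; unfold mapp; simpl; f_equal; ring].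
Qed.

Section HeckeOrbit.
Variable q : nat.
Hypothesis hq : (3 <= q)%nat.

Lemma Lambda_q_e1 : Lambda_q q (1, 0).
Proof. exists Id2; split; [constructor | rewrite mapp_Id2; reflexivity]. Qed.

Lemma Lambda_q_mapp X v : hecke_gen q X -> Lambda_q q v -> Lambda_q q (mapp X v).
Proof.
  intros HX [g [Hg ->]]; exists (mmul X g); split; [| symmetry; apply mapp_mmul].
  destruct HX as [-> | [-> | [-> | ->]]]; constructor; exact Hg.
Qed.

Lemma Lambda_q_e2 : Lambda_q q (0, 1).
Proof.
  replace (0, 1) with (mapp Smat (1, 0)) by (unfold mapp; simpl; f_equal; ring).
  apply Lambda_q_mapp; [left; reflexivity | exact Lambda_q_e1].
Qed.

Lemma Lambda_q_vopp v : Lambda_q q v -> Lambda_q q (vopp v).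
Proof.
  intro H; replace (vopp v) with (mapp Smat (mapp Smat v))
    by (destruct v; unfold mapp, vopp; simpl; f_equal; ring).
  apply Lambda_q_mapp; [left; reflexivity |]; apply Lambda_q_mapp; [left; reflexivity | exact H].
Qed.

Lemma Lambda_q_ind (P : vec2 -> Prop) : P (1, 0) ->
  (forall X w, hecke_gen q X -> Lambda_q q w -> P w -> P (mapp X w)) ->
  forall w, Lambda_q q w -> P w.
Proof.
  intros H0 HX w [g [Hg ->]].
  induction Hg as [| g Hg IH | g Hg IH | g Hg IH | g Hg IH]; [rewrite mapp_Id2; exact H0 | ..];
    rewrite mapp_mmul; apply HX; try (exists g; split; [exact Hg | reflexivity]); try exact IH;
    unfold hecke_gen; tauto.
Qed.

Lemma Lambda_q_ind2 (P : vec2 -> vec2 -> Prop) :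
  (forall v, Lambda_q q v -> P (1, 0) v) ->
  (forall X w v, hecke_gen q X -> P w v -> P (mapp X w) (mapp X v)) ->
  forall w v, Lambda_q q w -> Lambda_q q v -> P w v.
Proof.
  intros H0 HX w v Hw Hv; revert v Hv; pattern w; apply Lambda_q_ind; [exact H0 | | exact Hw].
  clear w Hw; intros X w HXg _ IH v Hv.
  destruct (hecke_gen_inverse q X HXg) as [_ [Y [HYg HXY]]].
  rewrite <- (HXY v); apply HX; [exact HXg |]; apply IH, Lambda_q_mapp; assumption.
Qed.

Lemma Lambda_q_det_gap w v : Lambda_q q w -> Lambda_q q v ->
  (vdet w v = 0 /\ (v = w \/ v = vopp w)) \/ 1 <= Rabs (vdet w v).
Proof.
  revert w v; apply Lambda_q_ind2.
  - intros [a c] Hv; unfold vdet; simpl; replace (1 * c - 0 * a) with c by ring.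
    destruct (Lambda_q_entries q hq a c Hv) as [[-> [-> | ->]] | H]; [| | right; exact H];
      left; split; [reflexivity | left; reflexivity | reflexivity |].
    right; unfold vopp; simpl; f_equal; ring.
  - intros X w v HX; destruct (hecke_gen_inverse q X HX) as [hdet _].
    rewrite vdet_mapp, hdet, Rmult_1_l, <- mapp_vopp.
    intros [[h0 [-> | ->]] | h1]; [left; split; auto .. | right; exact h1].
Qed.

(* The conjugate of T_q by the group element sending e1 to w. *)
Lemma Lambda_q_shear w v : Lambda_q q w -> Lambda_q q v ->
  Lambda_q q (vshift v (lambda_q q * vdet w v) w) /\
  Lambda_q q (vshift v (- (lambda_q q * vdet w v)) w).
Proof.
  revert w v; apply Lambda_q_ind2.
  - intros [a c] Hv; unfold vdet, vshift; simpl; split.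
    + replace (a + _, c + _) with (mapp (Tmat q) (a, c)) by (unfold mapp; simpl; f_equal; ring).
      apply Lambda_q_mapp; [unfold hecke_gen; tauto | exact Hv].
    + replace (a + _, c + _) with (mapp (Tinv q) (a, c)) by (unfold mapp; simpl; f_equal; ring).
      apply Lambda_q_mapp; [unfold hecke_gen; tauto | exact Hv].
  - intros X w v HX; destruct (hecke_gen_inverse q X HX) as [hdet _].
    rewrite vdet_mapp, hdet, Rmult_1_l, <- !mapp_vshift.
    intros [H1 H2]; split; apply Lambda_q_mapp; assumption.
Qed.

Lemma Lambda_q_partner w : Lambda_q q w -> exists v, Lambda_q q v /\ vdet w v = 1.
Proof.
  revert w; apply (Lambda_q_ind (fun w => exists v, Lambda_q q v /\ vdet w v = 1)).
  - exists (0, 1); split; [exact Lambda_q_e2 | unfold vdet; simpl; ring].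
  - intros X w HX _ [v [Hv Hd]]; exists (mapp X v); split; [apply Lambda_q_mapp; assumption |].
    destruct (hecke_gen_inverse q X HX) as [hdet _]; rewrite vdet_mapp, hdet, Hd; ring.
Qed.

Lemma Lambda_q_nonzero : ~ Lambda_q q (0, 0).
Proof.
  intro H; destruct (Lambda_q_entries q hq 0 0 H) as [[_ h] | h]; rewrite ?Rabs_R0 in h; lra.
Qed.

End HeckeOrbit.

Lemma Z_iterate (P : R -> Prop) (c : R) :
  (forall t, P t -> P (t + c) /\ P (t - c)) -> P 0 -> forall k : Z, P (IZR k * c).
Proof.
  intros Hstep H0.
  assert (Hnat : forall n : nat, P (INR n * c) /\ P (- INR n * c)).
  { induction n as [| n [IHp IHm]].
    - simpl; replace (0 * c) with 0 by ring; replace (- 0 * c) with 0 by ring; tauto.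
    - rewrite S_INR; replace ((INR n + 1) * c) with (INR n * c + c) by ring;
        replace (- (INR n + 1) * c) with (- INR n * c - c) by ring.
      split; [apply (Hstep _ IHp) | apply (Hstep _ IHm)]. }
  intro k; destruct (Z.le_ge_cases 0 k) as [hk | hk].
  - rewrite <- (Z2Nat.id k hk), <- INR_IZR_INZ; apply Hnat.
  - replace (IZR k) with (- INR (Z.to_nat (- k)))
      by (rewrite INR_IZR_INZ, Z2Nat.id, opp_IZR by lia; ring).
    apply Hnat.
Qed.

Lemma nearest_multiple (z c : R) : c <> 0 -> exists k : Z, Rabs (z + IZR k * c) <= Rabs c / 2.
Proof.
  intro hc; exists (Int_part (/ 2 - z / c)).
  destruct (base_Int_part (/ 2 - z / c)) as [h1 h2].
  set (k := IZR (Int_part (/ 2 - z / c))) in *.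
  replace (z + k * c) with (c * (k + z / c)) by (field; exact hc).
  assert (hk : Rabs (k + z / c) <= / 2) by (apply Rabs_le; lra).
  rewrite Rabs_mult; pose proof (Rabs_pos c); nra.
Qed.

Lemma Lambda_q_shear_Z q (hq : (3 <= q)%nat) u w :
  Lambda_q q u -> Lambda_q q w -> vdet u w = 1 ->
  forall k : Z, Lambda_q q (vshift w (IZR k * lambda_q q) u).
Proof.
  intros Hu Hw Hd; apply (Z_iterate (fun t => Lambda_q q (vshift w t u)));
    [| rewrite vshift_0; exact Hw].
  intros t Ht; destruct (Lambda_q_shear q u _ Hu Ht) as [H1 H2].
  rewrite vdet_vshift, Hd, Rmult_1_r, vshift_vshift in H1, H2; split; assumption.
Qed.

Definition adj2 (A : mat2) : mat2 := Mat2 (m22 A) (- m12 A) (- m21 A) (m11 A).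

Definition mat_abs_sum (M : mat2) : R :=
  Rabs (m11 M) + Rabs (m12 M) + Rabs (m21 M) + Rabs (m22 M).

Lemma mat_abs_sum_nonneg M : 0 <= mat_abs_sum M.
Proof.
  unfold mat_abs_sum; pose proof (Rabs_pos (m11 M)); pose proof (Rabs_pos (m12 M));
    pose proof (Rabs_pos (m21 M)); pose proof (Rabs_pos (m22 M)); lra.
Qed.

Lemma Rabs_mapp_le M v :
  Rabs (fst (mapp M v)) <= mat_abs_sum M * (Rabs (fst v) + Rabs (snd v)) /\
  Rabs (snd (mapp M v)) <= mat_abs_sum M * (Rabs (fst v) + Rabs (snd v)).
Proof.
  unfold mapp, mat_abs_sum; simpl.
  pose proof (Rabs_pos (m11 M)); pose proof (Rabs_pos (m12 M));
    pose proof (Rabs_pos (m21 M)); pose proof (Rabs_pos (m22 M));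
    pose proof (Rabs_pos (fst v)); pose proof (Rabs_pos (snd v)).
  split; (eapply Rle_trans; [apply Rabs_triang |]); rewrite !Rabs_mult; nra.
Qed.

Lemma fst_mapp_vshift A v t w :
  fst (mapp A (vshift v t w)) = fst (mapp A v) + t * fst (mapp A w).
Proof. unfold mapp, vshift; simpl; ring. Qed.

Section LatticeImage.
Variable q : nat.
Hypothesis hq : (3 <= q)%nat.
Variable A : mat2.
Hypothesis hA : inSL2 A.

Lemma mapp_adj2_mapp v : mapp (adj2 A) (mapp A v) = v.
Proof.
  unfold inSL2, det2 in hA; destruct v as [a c]; unfold mapp, adj2; simpl; f_equal.
  - transitivity ((m11 A * m22 A - m12 A * m21 A) * a); [ring | rewrite hA; ring].
  - transitivity ((m11 A * m22 A - m12 A * m21 A) * c); [ring | rewrite hA; ring].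
Qed.

Lemma mapp_inj v w : mapp A v = mapp A w -> v = w.
Proof. intro E; rewrite <- (mapp_adj2_mapp v), <- (mapp_adj2_mapp w), E; reflexivity. Qed.

Lemma ALambda_mapp u : Lambda_q q u -> ALambda q A (mapp A u).
Proof. intro Hu; exists u; split; [exact Hu | reflexivity]. Qed.

Section VerticalVector.
Variables (y : R) (w0 : vec2).
Hypotheses (hy : y <> 0) (Hw0 : Lambda_q q w0) (Ew0 : (0, y) = mapp A w0).

Lemma fst_mapp_vertical v : y * fst (mapp A v) = - vdet w0 v.
Proof.
  unfold inSL2, det2 in hA; destruct w0 as [w1 w2], v as [v1 v2].
  unfold mapp in Ew0; simpl in Ew0; injection Ew0 as E1 E2.
  unfold vdet, mapp; simpl; rewrite E2.
  transitivity ((m11 A * w1 + m12 A * w2) * (m21 A * v1 + m22 A * v2)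
     - (m11 A * m22 A - m12 A * m21 A) * (w1 * v2 - w2 * v1)); [ring |].
  rewrite <- E1, hA; ring.
Qed.

Lemma hmat_mapp_vertical s v :
  mapp (hmat s) (mapp A v) = mapp A (vshift v (s / y ^ 2 * vdet w0 v) w0).
Proof.
  assert (hx : fst (mapp A v) = - vdet w0 v / y)
    by (apply (Rmult_eq_reg_l y); [rewrite fst_mapp_vertical; field |]; exact hy).
  rewrite mapp_vshift, <- Ew0; destruct (mapp A v) as [x z]; simpl in hx.
  unfold mapp, hmat, vshift; simpl; rewrite hx; f_equal; field; exact hy.
Qed.

Lemma vertical_hmat_invariant : set_invariant (hmat (lambda_q q * y ^ 2)) (ALambda q A).
Proof.
  assert (hl : forall t, lambda_q q * y ^ 2 / y ^ 2 * t = lambda_q q * t)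
    by (intro t; field; exact hy).
  intro v; split.
  - intros [w [[u [Hu ->]] ->]]; rewrite hmat_mapp_vertical, hl.
    apply ALambda_mapp, (Lambda_q_shear q w0 u Hw0 Hu).
  - intros [u [Hu ->]]; exists (mapp A (vshift u (- (lambda_q q * vdet w0 u)) w0)); split.
    + apply ALambda_mapp, (Lambda_q_shear q w0 u Hw0 Hu).
    + rewrite hmat_mapp_vertical, vdet_vshift, hl, vshift_vshift.
      replace (- (lambda_q q * vdet w0 u) + lambda_q q * vdet w0 u) with 0 by ring.
      rewrite vshift_0; reflexivity.
Qed.

(* With v a partner of w0, h_s maps A v to A (v + t w0), t = s / y^2; discreteness of
   determinants against v forces t >= 1 and t = lambda or |t - lambda| >= 1. *)
Lemma vertical_hmat_minimal s : 0 < s -> set_invariant (hmat s) (ALambda q A) ->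
  lambda_q q * y ^ 2 <= s.
Proof.
  intros hs Hinv; destruct (Lambda_q_partner q w0 Hw0) as [v [Hv Hd]].
  assert (hy2 : 0 < y ^ 2) by (pose proof (Rsqr_pos_lt y hy); unfold Rsqr in *; nra).
  set (t := s / y ^ 2).
  assert (ht : 0 < t) by (apply Rdiv_lt_0_compat; assumption).
  assert (Hu : ALambda q A (mapp (hmat s) (mapp A v)))
    by (apply Hinv; exists (mapp A v); split; [apply ALambda_mapp, Hv | reflexivity]).
  destruct Hu as [u [Hu Eu]]; rewrite hmat_mapp_vertical, Hd, Rmult_1_r in Eu.
  apply mapp_inj in Eu; fold t in Eu; subst u.
  pose proof (proj2 (Lambda_q_shear q w0 _ Hw0 Hu)) as Hu'.
  rewrite vdet_vshift, Hd, vshift_vshift in Hu'.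
  pose proof (lambda_q_bounds q hq) as [hl0 hl2].
  assert (t1 : 1 <= t).
  { destruct (Lambda_q_det_gap q hq v _ Hv Hu) as [[h _] | h];
      rewrite vdet_vshift_self, Hd in h; [lra | rewrite Rabs_left in h; lra]. }
  assert (t2 : lambda_q q <= t).
  { destruct (Lambda_q_det_gap q hq v _ Hv Hu') as [[h _] | h];
      rewrite vdet_vshift_self, Hd in h; [lra |].
    destruct (Rle_dec (lambda_q q) t) as [| hlt]; [assumption |].
    rewrite Rabs_right in h; lra. }
  replace s with (t * y ^ 2) by (unfold t; field; exact hy); nra.
Qed.

Lemma vertical_strip_empty : exists tau0, 0 < tau0 /\
  forall v, ALambda q A v -> ~ in_strip tau0 v.
Proof.
  assert (hay : 0 < Rabs y) by (apply Rabs_pos_lt; exact hy).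
  exists (/ (2 * Rabs y)); split; [apply Rinv_0_lt_compat; lra |].
  intros v [u [Hu ->]] [h1 h2].
  pose proof (fst_mapp_vertical u) as hf.
  destruct (Lambda_q_det_gap q hq w0 u Hw0 Hu) as [[h _] | h].
  - rewrite h, Ropp_0 in hf; apply Rmult_integral in hf; lra.
  - replace (vdet w0 u) with (- (y * fst (mapp A u))) in h by lra.
    rewrite Rabs_Ropp, Rabs_mult, (Rabs_right (fst (mapp A u))) in h by lra.
    assert (Rabs y * fst (mapp A u) <= Rabs y * / (2 * Rabs y)) by (apply Rmult_le_compat_l; lra).
    replace (Rabs y * / (2 * Rabs y)) with (/ 2) in H by (field; lra); lra.
Qed.

End VerticalVector.

Section HorocycleInvariant.
Variable s : R.
Hypotheses (hs : 0 < s) (Hinv : set_invariant (hmat s) (ALambda q A)).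

Lemma hmat_shift_Z x z : ALambda q A (x, z) ->
  forall k : Z, ALambda q A (x, z + IZR k * (s * x)).
Proof.
  intro H0; apply (Z_iterate (fun t => ALambda q A (x, z + t))); [| rewrite Rplus_0_r; exact H0].
  intros t Ht; split.
  - destruct (proj2 (Hinv (x, z + t)) Ht) as [[x' z'] [Hw E]].
    unfold mapp, hmat in E; simpl in E; injection E as E1 E2.
    replace x' with x in * by lra.
    replace (z + (t + s * x)) with z' by lra; exact Hw.
  - replace (x, z + (t - s * x)) with (mapp (hmat s) (x, z + t))
      by (unfold mapp, hmat; simpl; f_equal; ring).
    apply Hinv; exists (x, z + t); split; [exact Ht | reflexivity].
Qed.

(* A point (x, z) of the strip can be sheared to |z| <= s x / 2; pulling it back by A^-1
   would give an orbit point of sup-norm < 1. *)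
Lemma invariant_strip_empty : exists tau0, 0 < tau0 /\
  forall v, ALambda q A v -> ~ in_strip tau0 v.
Proof.
  set (N := mat_abs_sum (adj2 A)); pose proof (mat_abs_sum_nonneg (adj2 A)) as hN; fold N in hN.
  set (e := / (1 + N)).
  assert (he : 0 < e) by (apply Rinv_0_lt_compat; lra).
  assert (he1 : (1 + N) * e = 1) by (unfold e; field; lra).
  exists (e / (1 + s)); split; [apply Rdiv_lt_0_compat; lra |].
  intros [x z] H [hx hxe]; simpl in hx, hxe.
  assert (hsx : Rabs (s * x) = s * x) by (apply Rabs_right; nra).
  destruct (nearest_multiple z (s * x)) as [k hk]; [nra |]; rewrite hsx in hk.
  destruct (hmat_shift_Z x z H k) as [u [Hu Eu]].
  set (z' := z + IZR k * (s * x)) in *.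
  assert (hxs : x * (1 + s) <= e)
    by (apply (Rmult_le_compat_r (1 + s)) in hxe; [| lra];
        replace (e / (1 + s) * (1 + s)) with e in hxe by (field; lra); exact hxe).
  assert (hsmall : N * (Rabs x + Rabs z') < 1).
  { assert (hsum : Rabs x + Rabs z' <= e) by (rewrite (Rabs_right x) by lra; nra).
    apply (Rmult_le_compat_l N) in hsum; [lra | exact hN]. }
  pose proof (Rabs_mapp_le (adj2 A) (x, z')) as [h1 h2]; fold N in h1, h2.
  cbn [fst snd] in h1, h2; rewrite Eu, mapp_adj2_mapp in h1, h2.
  destruct u as [a c]; simpl in h1, h2.
  destruct (Lambda_q_entries q hq a c Hu) as [[_ [-> | ->]] | hc];
    [rewrite Rabs_R1 in h1 | rewrite Rabs_left in h1 by lra |]; lra.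
Qed.

End HorocycleInvariant.

(* Euclid's algorithm on the first coordinates of A-images: shearing along u contracts
   |fst (A u)| by at least lambda_q / 2 < 1, so without vertical vectors the strip is hit. *)
Section NoVertical.
Hypothesis hnv : forall y, ALambda q A (0, y) -> y = 0.

Lemma fst_mapp_nonzero u : Lambda_q q u -> fst (mapp A u) <> 0.
Proof.
  intros Hu h0; apply (Lambda_q_nonzero q hq).
  assert (E : mapp A u = (0, snd (mapp A u))) by (rewrite <- h0; destruct (mapp A u); reflexivity).
  assert (h1 : snd (mapp A u) = 0) by (apply hnv; rewrite <- E; apply ALambda_mapp, Hu).
  rewrite h1 in E; replace (0, 0) with (mapp A (0, 0)) in E by (unfold mapp; simpl; f_equal; ring).
  apply mapp_inj in E; rewrite <- E; exact Hu.
Qed.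

Lemma euclid_step u w : Lambda_q q u -> Lambda_q q w -> vdet u w = 1 ->
  exists u' w', Lambda_q q u' /\ Lambda_q q w' /\ vdet u' w' = 1 /\
    Rabs (fst (mapp A u')) <= lambda_q q / 2 * Rabs (fst (mapp A u)).
Proof.
  intros Hu Hw Hd; pose proof (lambda_q_bounds q hq) as [hl0 _].
  assert (hc : lambda_q q * fst (mapp A u) <> 0)
    by (apply Rmult_integral_contrapositive; split; [lra | apply fst_mapp_nonzero, Hu]).
  destruct (nearest_multiple (fst (mapp A w)) _ hc) as [k hk].
  exists (vshift w (IZR k * lambda_q q) u), (vopp u); split; [| split; [| split]].
  - apply (Lambda_q_shear_Z q hq u w Hu Hw Hd).
  - apply Lambda_q_vopp, Hu.
  - rewrite <- Hd; unfold vdet, vshift, vopp; simpl; ring.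
  - rewrite fst_mapp_vshift, Rabs_mult, (Rabs_right (lambda_q q)) in * by lra.
    replace (fst (mapp A w) + IZR k * lambda_q q * fst (mapp A u))
      with (fst (mapp A w) + IZR k * (lambda_q q * fst (mapp A u))) by ring; lra.
Qed.

Lemma euclid_iterate n : exists u, Lambda_q q u /\
  Rabs (fst (mapp A u)) <= (lambda_q q / 2) ^ n * Rabs (fst (mapp A (1, 0))).
Proof.
  assert (H : exists u w, Lambda_q q u /\ Lambda_q q w /\ vdet u w = 1 /\
    Rabs (fst (mapp A u)) <= (lambda_q q / 2) ^ n * Rabs (fst (mapp A (1, 0)))).
  { induction n as [| n [u [w [Hu [Hw [Hd Hb]]]]]].
    - exists (1, 0), (0, 1); split; [exact (Lambda_q_e1 q) |]; split; [exact (Lambda_q_e2 q) |].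
      split; [unfold vdet; simpl; ring | simpl; lra].
    - destruct (euclid_step u w Hu Hw Hd) as [u' [w' [Hu' [Hw' [Hd' Hb']]]]].
      exists u', w'; split; [| split; [| split]]; try assumption.
      pose proof (lambda_q_bounds q hq) as [hl0 _].
      eapply Rle_trans; [exact Hb' |]; rewrite <- tech_pow_Rmult, Rmult_assoc.
      apply Rmult_le_compat_l; lra. }
  destruct H as [u [_ [Hu [_ [_ Hb]]]]]; exists u; split; assumption.
Qed.

Lemma no_vertical_strip_hit tau0 : 0 < tau0 -> exists v, ALambda q A v /\ in_strip tau0 v.
Proof.
  intro ht; pose proof (lambda_q_bounds q hq) as [hl0 hl2].
  set (C := Rabs (fst (mapp A (1, 0))) + 1).
  assert (hC : 0 < C) by (unfold C; pose proof (Rabs_pos (fst (mapp A (1, 0)))); lra).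
  assert (hr : Rabs (lambda_q q / 2) < 1) by (rewrite Rabs_right; lra).
  destruct (pow_lt_1_zero _ hr (tau0 / C)) as [n Hn]; [apply Rdiv_lt_0_compat; lra |].
  specialize (Hn n (Nat.le_refl n)).
  assert (hpow : 0 <= (lambda_q q / 2) ^ n) by (apply pow_le; lra).
  rewrite Rabs_right in Hn by lra.
  assert (hlt : (lambda_q q / 2) ^ n * C < tau0)
    by (apply (Rmult_lt_compat_r C) in Hn; [| lra];
        replace (tau0 / C * C) with tau0 in Hn by (field; lra); exact Hn).
  destruct (euclid_iterate n) as [u [Hu Hb]].
  assert (hu : 0 < Rabs (fst (mapp A u))) by (apply Rabs_pos_lt, fst_mapp_nonzero, Hu).
  assert (hbound : Rabs (fst (mapp A u)) < tau0) by (unfold C in hlt; nra).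
  destruct (Rle_dec 0 (fst (mapp A u))) as [hpos | hneg].
  - exists (mapp A u); split; [apply ALambda_mapp, Hu |].
    rewrite Rabs_right in hu, hbound by lra; split; lra.
  - exists (mapp A (vopp u)); split; [apply ALambda_mapp, Lambda_q_vopp, Hu |].
    rewrite Rabs_left in hu, hbound by lra.
    rewrite mapp_vopp; unfold in_strip, vopp; cbn [fst]; lra.
Qed.

End NoVertical.

Lemma strip_empty_vertical tau0 : 0 < tau0 -> (forall v, ALambda q A v -> ~ in_strip tau0 v) ->
  exists y, y <> 0 /\ ALambda q A (0, y).
Proof.
  intros ht Hs; apply NNPP; intro Hn.
  assert (hnv : forall y, ALambda q A (0, y) -> y = 0)
    by (intros y Hy; apply NNPP; intro hy; apply Hn; exists y; split; assumption).
  destruct (no_vertical_strip_hit hnv tau0 ht) as [v [Hv Hsv]]; exact (Hs v Hv Hsv).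
Qed.

End LatticeImage.

Theorem mainTheorem6 (q : nat) (hq : (3 <= q)%nat) (A : mat2) (hA : inSL2 A) :
  let P1 := exists y : R, y <> 0 /\ ALambda q A (0, y) in
  let P2 := exists s0 : R, 0 < s0 /\ set_invariant (hmat s0) (ALambda q A) in
  let P3 := exists tau0 : R, 0 < tau0 /\
              (forall v, ALambda q A v -> ~ in_strip tau0 v) in
  ((P1 <-> P2) /\ (P2 <-> P3)) /\
  (forall a : R, 0 < a ->
     (exists y : R, Rabs y = a /\ ALambda q A (0, y)) ->
     (0 < lambda_q q * a ^ 2 /\
      set_invariant (hmat (lambda_q q * a ^ 2)) (ALambda q A) /\
      forall s, 0 < s -> set_invariant (hmat s) (ALambda q A) ->
        lambda_q q * a ^ 2 <= s)).
Proof.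
  intros P1 P2 P3; pose proof (lambda_q_bounds q hq) as [hl _].
  assert (H12 : P1 -> P2).
  { intros [y [hy [w0 [Hw0 E]]]]; exists (lambda_q q * y ^ 2); split.
    - pose proof (Rsqr_pos_lt y hy); unfold Rsqr in *; nra.
    - exact (vertical_hmat_invariant q A hA y w0 hy Hw0 E). }
  assert (H13 : P1 -> P3)
    by (intros [y [hy [w0 [Hw0 E]]]]; exact (vertical_strip_empty q hq A hA y w0 hy Hw0 E)).
  assert (H23 : P2 -> P3) by (intros [s [hs Hi]]; exact (invariant_strip_empty q hq A hA s hs Hi)).
  assert (H31 : P3 -> P1) by (intros [t [ht Hs]]; exact (strip_empty_vertical q hq A hA t ht Hs)).
  split; [tauto |].
  intros a ha [y [<- [w0 [Hw0 E]]]]; rewrite pow2_abs.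
  assert (hy : y <> 0) by (intro h; subst y; rewrite Rabs_R0 in ha; lra).
  split; [pose proof (Rsqr_pos_lt y hy); unfold Rsqr in *; nra |]; split.
  - exact (vertical_hmat_invariant q A hA y w0 hy Hw0 E).
  - exact (vertical_hmat_minimal q hq A hA y w0 hy Hw0 E).
Qed.
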